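(* Let $f \in \Bbbk[t] \setminus \Bbbk$. Then $L(f) = \mathbb{W}_1 \cap \mathbb{W}[f]$, where the intersection is taken inside $\Bbbk(t)\partial$.
   Context: $\Bbbk$ is a field of characteristic zero. $\mathbb{W}_1 = \mathrm{Der}(\Bbbk[t]) = \Bbbk[t]\partial$ with $\partial = d/dt$ and bracket $[f\partial, g\partial] = (fg'-f'g)\partial$; it is viewed as a Lie subalgebra of $\Bbbk(t)\partial$. For $f,g \in \Bbbk[t]\setminus\{0\}$ with $f'g \in \Bbbk[f]$, write $L(f,g) = \Bbbk[f]\,g\partial$ (a Lie subalgebra of $\mathbb{W}_1$). Let $g_f$ be the unique monic polynomial of minimal degree with $f'g_f \in \Bbbk[f]$, and put $L(f) = L(f,g_f)$. $\mathbb{W}[f] = \mathrm{Der}(\Bbbk[f]) = \Bbbk[f]\partial_f$, identified with the subalgebra $\frac{1}{f'}\Bbbk[f]\partial$ of $\Bbbk(t)\partial$ (i.e. $\partial_f = \frac{1}{f'}\partial$). *)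

From HB Require Import structures.
From mathcomp Require Import all_boot all_order all_algebra.
From mathcomp Require Import fraction.
Set Implicit Arguments. Unset Strict Implicit. Unset Printing Implicit Defensive.
Import GRing.Theory.
Local Open Scope ring_scope.

Notation "x %:F" := (@FracField.tofrac _ x).

(* A vector field  r \partial  in  k(t)\partial  is identified with its
   coefficient r in the field of rational functions k(t) = {fraction {poly F}}. *)

Definition inKf (F : fieldType) (f p : {poly F}) : Prop :=
  exists h : {poly F}, p = h \Po f.

Definition is_gf (F : fieldType) (f g : {poly F}) : Prop :=
  [/\ g \is monic, inKf f (f^`() * g) &
      forall h : {poly F}, h \is monic -> inKf f (f^`() * h) -> (size g <= size h)%N].

Definition W1 (F : fieldType) (r : {fraction {poly F}}) : Prop :=
  exists q : {poly F}, r = q%:F.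

(* W[f] = k[f]\partial_f = (1/f') k[f] \partial *)
Definition Wf (F : fieldType) (f : {poly F}) (r : {fraction {poly F}}) : Prop :=
  exists h : {poly F}, r = (h \Po f)%:F / (f^`())%:F.

Definition Lfg (F : fieldType) (f g : {poly F}) (r : {fraction {poly F}}) : Prop :=
  exists p : {poly F}, r = ((p \Po f) * g)%:F.

From HB Require Import structures.
From mathcomp Require Import all_boot all_order all_algebra.
From mathcomp Require Import fraction.
From mathcomp Require Import zify.
Set Implicit Arguments. Unset Strict Implicit. Unset Printing Implicit Defensive.
Local Open Scope ring_scope.
Import GRing.Theory.

(* The polynomials q with f' q in k[f] form a k[f]-module containing g_f.  In
   characteristic zero, deg (f' q) = deg f - 1 + deg q must be a multiple of
   deg f, so deg q is congruent to deg g_f modulo deg f; by minimality of g_f it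
   is also at least deg g_f.  Hence subtracting a suitable multiple c f^m g_f
   kills the leading term of q, and induction on the degree writes q as
   p(f) g_f.  In k(t), W_1 and W[f] meet exactly in these q. *)

Lemma size_subr_lt (R : nzRingType) (p q : {poly R}) :
  p != 0 -> size p = size q -> lead_coef p = lead_coef q ->
  (size (p - q)%R < size p)%N.
Proof.
move=> p0 Epq Elead; rewrite [size p]polySpred // ltnS.
apply/leq_sizeP => j; rewrite leq_eqVlt => /orP[/eqP <-|lt_j]; rewrite coefB.
  by move: Elead; rewrite !lead_coefE -Epq => ->; rewrite subrr.
have le_pj : (size p <= j)%N by rewrite (polySpred p0).
by rewrite !nth_default ?subrr // -Epq.
Qed.

Lemma size_deriv_pchar0 (F : fieldType) (p : {poly F}) :
  [pchar F] =i pred0 -> size p^`() = (size p).-1.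
Proof.
move=> charF0; have [le_p1|lt_1p] := leqP (size p) 1.
  by rewrite [p]size1_polyC // derivC size_poly0 size_polyC; case: eqP.
rewrite size_poly_eq // -mulr_natr mulf_neq0 ?((pcharf0P _).1 charF0) //.
by rewrite -subn2 -subSn // subn2 -lead_coefE lead_coef_eq0 -size_poly_gt0 ltnW.
Qed.

Lemma comp_polyXn (R : comNzRingType) (n : nat) (p : {poly R}) :
  'X^n \Po p = p ^+ n.
Proof. by rewrite rmorphXn /= comp_polyX. Qed.

Lemma inKfB (F : fieldType) (f p q : {poly F}) :
  inKf f p -> inKf f q -> inKf f (p - q).
Proof. by move=> [h ->] [k ->]; exists (h - k); rewrite comp_polyB. Qed.

Section DerivativeModule.

Variables (F : fieldType) (f : {poly F}).
Hypothesis charF0 : [pchar F] =i pred0.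
Hypothesis f_nonconst : (1 < size f)%N.

Lemma deriv_nonconst_neq0 : f^`() != 0.
Proof. by rewrite -size_poly_gt0 size_deriv_pchar0 // -ltnS prednK // ltnW. Qed.

Lemma Wf_tofracE (q : {poly F}) : Wf f q%:F <-> inKf f (f^`() * q).
Proof.
have d0 : (f^`())%:F != 0 by rewrite tofrac_eq0 deriv_nonconst_neq0.
split=> -[h Eh]; exists h.
  by apply/eqP; rewrite -tofrac_eq tofracM Eh mulrC mulfVK.
by rewrite -Eh tofracM mulrAC mulfV ?mul1r.
Qed.

Lemma size_deriv_mul_comp (q h : {poly F}) :
  q != 0 -> f^`() * q = h \Po f ->
  ((size f).-1 + size q).-2 = ((size h).-1 * (size f).-1)%N.
Proof.
move=> q0 E; rewrite -size_comp_poly -E size_mul ?deriv_nonconst_neq0 //.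
by rewrite size_deriv_pchar0.
Qed.

Variable gf : {poly F}.
Hypothesis Hgf : is_gf f gf.

Lemma is_gf_neq0 : gf != 0.
Proof. by case: Hgf => /monic_neq0. Qed.

Lemma inKf_deriv_comp_mul (p : {poly F}) : inKf f (f^`() * ((p \Po f) * gf)).
Proof.
case: Hgf => _ [k Ek] _; exists (p * k).
by rewrite comp_polyM -Ek mulrCA.
Qed.

Lemma is_gf_size_min (q : {poly F}) :
  q != 0 -> inKf f (f^`() * q) -> (size gf <= size q)%N.
Proof.
move=> q0 [h Eh]; case: Hgf => _ _ /(_ ((lead_coef q)^-1 *: q)).
have lq0 : lead_coef q != 0 by rewrite lead_coef_eq0.
rewrite size_scale ?invr_eq0 //; apply.
  by apply/monicP; rewrite lead_coefZ mulVf.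
by exists ((lead_coef q)^-1 *: h); rewrite comp_polyZ -Eh scalerAr.
Qed.

Lemma size_deriv_module (q : {poly F}) :
  q != 0 -> inKf f (f^`() * q) ->
  exists m : nat, size q = (m * (size f).-1 + size gf)%N.
Proof.
move=> q0 Mq; have le_gq := is_gf_size_min q0 Mq.
case: Mq (Hgf) => h /(size_deriv_mul_comp q0) Rq [_ [k Ek] _].
have Rg := size_deriv_mul_comp is_gf_neq0 Ek.
have sg_gt0 : (0 < size gf)%N by rewrite size_poly_gt0 is_gf_neq0.
exists ((size h).-1 - (size k).-1)%N.
rewrite mulnBl -Rq -Rg; lia.
Qed.

Lemma leading_term_deriv_module (q : {poly F}) :
  q != 0 -> inKf f (f^`() * q) ->
  exists p : {poly F},
    size ((p \Po f) * gf) = size q /\ lead_coef ((p \Po f) * gf) = lead_coef q.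
Proof.
move=> q0 /(size_deriv_module q0) [m Eq].
have lf0 : lead_coef f != 0 by rewrite lead_coef_eq0 -size_poly_gt0 ltnW.
have lfm0 : lead_coef f ^+ m != 0 by rewrite expf_neq0.
set c := lead_coef q / lead_coef f ^+ m.
have c0 : c != 0 by rewrite mulf_neq0 ?invr_eq0 ?lead_coef_eq0.
have Ecomp : (c *: 'X^m) \Po f = c *: f ^+ m by rewrite comp_polyZ comp_polyXn.
have fm0 : f ^+ m != 0 by rewrite expf_neq0 // -size_poly_gt0 ltnW.
exists (c *: 'X^m); rewrite Ecomp -scalerAl; split.
  rewrite size_scale // size_mul ?is_gf_neq0 // [size (f ^+ m)]polySpred //.
  by rewrite size_exp Eq mulnC.
case: Hgf => /monicP lg _ _.
by rewrite lead_coefZ lead_coefM lead_coef_exp lg mulr1 mulfVK.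
Qed.

Lemma deriv_module_mul_gf (q : {poly F}) :
  inKf f (f^`() * q) -> exists p : {poly F}, q = (p \Po f) * gf.
Proof.
elim: (size q).+1 {-2}q (ltnSn (size q)) => // N IH {}q lt_qN Mq.
have [->|q0] := eqVneq q 0; first by exists 0; rewrite comp_poly0 mul0r.
have [p0 [Esize Elead]] := leading_term_deriv_module q0 Mq.
have [p1 Ep1] : exists p1, q - (p0 \Po f) * gf = (p1 \Po f) * gf.
  apply: IH; last by rewrite mulrBr; exact: inKfB (inKf_deriv_comp_mul p0).
  by rewrite -ltnS (leq_trans _ lt_qN) // ltnS size_subr_lt.
by exists (p1 + p0); rewrite comp_polyD mulrDl -Ep1 subrK.
Qed.

End DerivativeModule.

Theorem mainTheorem1 (F : fieldType) (charF0 : [pchar F] =i pred0)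
  (f : {poly F}) (f_nonconst : (1 < size f)%N)
  (gf : {poly F}) (Hgf : is_gf f gf) :
  forall r : {fraction {poly F}}, Lfg f gf r <-> (W1 r /\ Wf f r).
Proof.
move=> r; split.
  case=> p ->; split; first by exists ((p \Po f) * gf).
  by apply/(Wf_tofracE charF0 f_nonconst); exact: inKf_deriv_comp_mul.
case=> -[q ->] /(Wf_tofracE charF0 f_nonconst).
by case/(deriv_module_mul_gf charF0 f_nonconst Hgf) => p ->; exists p.
Qed.
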